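(* Assume the bounded-cost assumption and $J\ge2$. Suppose that for every $t\in[T]$ there is $\hat Z_t\in\mathcal Z$ with $\hat Z^j_t=\hat Z_t$ for all $j\in[J]$, and let $\underline L_T=\sum_{t=1}^T\mathbf 1\{\hat Z_t\ne Z_t\}$. If all agents use POMWU with learning rate $\eta^\star=\Theta\big(J^{-1/2}T^{-1/4}[\ln K(\underline L_T+m)]^{1/4}\big)$, then for every $j\in[J]$, $$\mathrm{Reg}^j_T=O\big([\ln K(\underline L_T+m)]^{3/4}T^{1/4}J^{1/2}\big).$$
   Context: Setting. There are $J$ agents indexed by $j\in[J]$. Agent $j$ has a finite action set $\mathcal A^j=\{a^j_1,\dots,a^j_K\}$ with $K$ elements; $\mathcal A=\prod_i\mathcal A^i$, $\mathcal A^{-j}=\prod_{i\ne j}\mathcal A^i$. $\Delta_K$ is the probability simplex in $\mathbb R^K$, $w\in\Delta_K$ identified with a distribution on $\mathcal A^j$. The context set $\mathcal Z=\{z_1,\dots,z_m\}\subset\mathbb R^d$ is finite with $m$ elements. Agent $j$ has $\phi^j:\mathcal A\to\mathbb R^d$ and cost $c^j(\mathbf w,Z)=\mathbb E_{\mathbf a\sim\mathbf w}[\langle\phi^j(\mathbf a),Z\rangle]$; $c^j(w,\mathbf w^{-j},Z)=c^j(w\otimes\mathbf w^{-j},Z)$. $\Phi^j(\mathbf w^{-j})\in\mathbb R^{d\times K}$ has entries $\Phi^j(\mathbf w^{-j})_{\ell,k}=\mathbb E_{\mathbf a^{-j}\sim\mathbf w^{-j}}[\phi^j(a^j_k,\mathbf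 a^{-j})[\ell]]$. Bounded-cost assumption: $|\langle Z,\phi^j(\mathbf a)\rangle|\le1$ for all $j,\mathbf a,Z$. Game protocol: $T$ rounds, fixed sequence $Z_1,\dots,Z_T\in\mathcal Z$; at round $t$ each agent $j$ receives a prediction $\hat Z^j_t\in\mathcal Z$, plays $w^j_t\in\Delta_K$, incurs $c^j(w^j_t,\mathbf w^{-j}_t,Z_t)$ with $\mathbf w^{-j}_t=\bigotimes_{i\ne j}w^i_t$, and observes $Z_t$ and $\Phi^j(\mathbf w^{-j}_t)$. Contextual external regret: $\mathrm{Reg}^j_T=\sum_{t=1}^Tc^j(w^j_t,\mathbf w^{-j}_t,Z_t)-\min_{\pi:\mathcal Z\to\Delta_K}\sum_{t=1}^Tc^j(\pi(Z_t),\mathbf w^{-j}_t,Z_t)$. POMWU with learning rate $\eta>0$ (for agent $j$): maintain for each $z\in\mathcal Z$ a vector $\rho_z\in\mathbb R^K_{>0}$, initialized to $(1/K,\dots,1/K)$, and a matrix $\Psi_z\in\mathbb R^{d\times K}$, initialized to $0$. At round $t$, with $\hat Z=\hat Z^j_t$, play $w^j_t[\ell]=\rho_{\hat Z}[\ell]\exp(-\eta(\Psi_{\hat Z}^\top\hat Z)[\ell])/\sum_{k=1}^K\rho_{\hat Z}[k]\exp(-\eta(\Psi_{\hat Z}^\top\hat Z)[k])$. After observing $Z_t$ and $\Phi_t=\Phi^j(\mathbf w^{-j}_t)$, set $\Psi_{Z_t}\leftarrow\Phi_t$ and $\rho_{Z_t}[\ell]\leftarrow\rho_{Z_t}[\ell]\exp(-\eta(\Phi_t^\top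 Z_t)[\ell])$ for all $\ell$. $O,\Theta$ hide absolute constants. *)

From mathcomp Require Import all_boot all_order all_algebra.
From mathcomp Require Import reals sequences exp.
Set Implicit Arguments. Unset Strict Implicit. Unset Printing Implicit Defensive.
Import Order.TTheory GRing.Theory Num.Theory.
Local Open Scope ring_scope.

Section Game.
Variables (R : realType) (J K m d : nat).

Definition profile := {ffun 'I_J -> 'I_K}.

Definition in_simplex (v : 'I_K -> R) : Prop :=
  (forall k, 0 <= v k) /\ \sum_(k < K) v k = 1.

Definition inner (u v : 'rV[R]_d) : R := \sum_(l < d) u 0 l * v 0 l.

Definition cost (phi : profile -> 'rV[R]_d) (w : 'I_J -> 'I_K -> R)
    (Z : 'rV[R]_d) : R :=
  \sum_(a : profile) (\prod_(i < J) w i (a i)) * inner (phi a) Z.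

Definition Phi (j : 'I_J) (phi : profile -> 'rV[R]_d) (w : 'I_J -> 'I_K -> R)
    : 'M[R]_(d, K) :=
  \matrix_(l < d, k < K)
     \sum_(a : profile | a j == k) (\prod_(i < J | i != j) w i (a i)) * phi a 0 l.

Definition trmul (Psi : 'M[R]_(d, K)) (z : 'rV[R]_d) (l : 'I_K) : R :=
  \sum_(i < d) Psi i l * z 0 i.

Record pomwu_state := PState {
  rho : 'I_m -> 'I_K -> R;
  Psi : 'I_m -> 'M[R]_(d, K) }.

Definition pomwu_init : pomwu_state :=
  PState (fun _ _ => K%:R^-1) (fun _ => 0).

Definition pomwu_play (eta : R) (ctx : 'I_m -> 'rV[R]_d) (zh : 'I_m)
    (s : pomwu_state) : 'I_K -> R :=
  fun l => rho s zh l * expR (- eta * trmul (Psi s zh) (ctx zh) l) /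
           \sum_(k < K) rho s zh k * expR (- eta * trmul (Psi s zh) (ctx zh) k).

Definition pomwu_update (eta : R) (ctx : 'I_m -> 'rV[R]_d) (zt : 'I_m)
    (Phit : 'M[R]_(d, K)) (s : pomwu_state) : pomwu_state :=
  PState (fun z l => if z == zt
                     then rho s z l * expR (- eta * trmul Phit (ctx zt) l)
                     else rho s z l)
         (fun z => if z == zt then Phit else Psi s z).

(* Joint dynamics: all J agents run POMWU with learning rate eta.
   phi j = phi^j, ctx = enumeration of the context set,
   Zs t / Zhat t = indices of Z_t and of the common prediction hat Z_t
   (rounds are numbered from 0). *)
Fixpoint pomwu_states (eta : R) (phi : 'I_J -> profile -> 'rV[R]_d)
    (ctx : 'I_m -> 'rV[R]_d) (Zs Zhat : nat -> 'I_m) (t : nat)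
    : 'I_J -> pomwu_state :=
  match t with
  | 0 => fun _ => pomwu_init
  | t'.+1 =>
      let st := pomwu_states eta phi ctx Zs Zhat t' in
      let w := fun i => pomwu_play eta ctx (Zhat t') (st i) in
      fun j => pomwu_update eta ctx (Zs t') (Phi j (phi j) w) (st j)
  end.

Definition pomwu_profile (eta : R) (phi : 'I_J -> profile -> 'rV[R]_d)
    (ctx : 'I_m -> 'rV[R]_d) (Zs Zhat : nat -> 'I_m) (t : nat)
    : 'I_J -> 'I_K -> R :=
  fun i => pomwu_play eta ctx (Zhat t)
             (pomwu_states eta phi ctx Zs Zhat t i).

Definition replace (w : 'I_J -> 'I_K -> R) (j : 'I_J) (v : 'I_K -> R)
    : 'I_J -> 'I_K -> R :=
  fun i => if i == j then v else w i.

(* sum_t c^j(w_t, Z_t) - sum_t c^j(pi(Z_t), w^{-j}_t, Z_t) for a fixed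
   policy pi : Z -> Delta_K (rounds t = 0..T-1). Contextual regret Reg^j_T is
   the maximum of this quantity over all policies pi. *)
Definition regret_against (T : nat) (phi : 'I_J -> profile -> 'rV[R]_d)
    (ctx : 'I_m -> 'rV[R]_d) (Zs : nat -> 'I_m)
    (w : nat -> 'I_J -> 'I_K -> R) (j : 'I_J) (pi : 'I_m -> 'I_K -> R) : R :=
  \sum_(t < T) cost (phi j) (w t) (ctx (Zs t))
  - \sum_(t < T) cost (phi j) (replace (w t) j (pi (Zs t))) (ctx (Zs t)).

Definition pred_errors (T : nat) (Zs Zhat : nat -> 'I_m) : nat :=
  #|[set t : 'I_T | Zhat t != Zs t]|.

End Game.

From mathcomp Require Import all_boot all_order all_algebra.
From mathcomp Require Import reals sequences exp.
From mathcomp Require Import ring lra zify.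
Set Implicit Arguments. Unset Strict Implicit. Unset Printing Implicit Defensive.
Import Order.TTheory GRing.Theory Num.Theory.
Local Open Scope ring_scope.

(* For every context separately, each agent runs optimistic Hedge whose prediction
   is the loss vector observed at the previous visit of that context.  The
   optimistic-Hedge potential argument bounds the regret by [m ln K / eta], plus
   [eta |loss - prediction|^2] per round, plus 2 per mispredicted round.  Call a
   round good if it is not the first visit of its context and neither it nor the
   previous visit of its context was mispredicted; at most [m + 2 L] rounds are bad.
   In a good round every agent played, at both visits, its strategy for the same
   context, and these differ by a factor [expR (O eta)]; as the loss vector is
   Lipschitz in the other agents' strategies (a hybrid argument on product
   distributions), [|loss - prediction| = O (J eta)].  Hence
   [Reg = O (m ln K / eta + L + m + eta^3 T J^2)], which the chosen [eta] balances;
   when [eta] is large the trivial bound [2 T] is already small enough. *)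

Section ExpFacts.
Variable R : realType.

Lemma expR_le1D2x (x : R) : 0 <= x -> x <= 1/2 -> expR x <= 1 + 2 * x.
Proof.
move=> x0 x1; have := expR_ge1Dx (- x); have := expRxMexpNx_1 x.
have := expR_gt0 x; nra.
Qed.

Lemma ln_ge_of_expR_le (a b : R) : 0 < b -> expR a <= b -> a <= ln b.
Proof. by move=> b0 h; rewrite -(expRK a) ler_ln // posrE expR_gt0. Qed.

Lemma half_le_ln2 : 1/2 <= ln (2 : R).
Proof. by apply: ln_ge_of_expR_le; [lra | have := @expR_le1D2x (1/2); lra]. Qed.

(* Since [expR (-c) >= 1 - c >= 2 - expR c]. *)
Lemma dist_le_of_expR_ratio (p q c : R) : 0 <= p ->
  p * expR (- c) <= q <= p * expR c -> `|p - q| <= p * (expR c - 1).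
Proof.
move=> p0 /andP[lo hi]; rewrite distrC ler_norml; apply/andP; split; last lra.
have : expR (- c) >= 2 - expR c by have := expR_ge1Dx c; have := expR_ge1Dx (- c); lra.
nra.
Qed.

End ExpFacts.

Section Hedge.
Variables (R : realType) (K : nat).
Implicit Types (p u v r M l : 'I_K -> R).

Definition normalize v (k : 'I_K) : R := v k / \sum_i v i.

Lemma sum_pos_gt0 v (k : 'I_K) : (forall i, 0 < v i) -> 0 < \sum_i v i.
Proof.
move=> hv; rewrite (bigD1 k) //=; apply: ltr_wpDr; last exact: hv.
by apply: sumr_ge0 => i _; apply: ltW.
Qed.

Lemma normalize_simplex v : (0 < K)%N -> (forall i, 0 < v i) ->
  in_simplex (normalize v).
Proof.
move=> Kp hv; split=> [k|].
  by rewrite /normalize divr_ge0 // ?ltW // (sum_pos_gt0 k).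
rewrite /normalize -big_distrl /= divff //; apply: lt0r_neq0.
exact: (sum_pos_gt0 (Ordinal Kp)).
Qed.

Lemma simplex_le1 p k : in_simplex p -> p k <= 1.
Proof. by move=> [p0 p1]; rewrite -p1 (bigD1 k) //= lerDl sumr_ge0. Qed.

Lemma abs_simplex_avg_le1 (p l : 'I_K -> R) : in_simplex p ->
  (forall k, `|l k| <= 1) -> `|\sum_k p k * l k| <= 1.
Proof.
move=> [p0 p1] hl; apply: (le_trans (ler_norm_sum _ _ _)).
rewrite -p1; apply: ler_sum => k _; rewrite normrM ger0_norm //.
by rewrite -[X in _ <= X]mulr1 ler_wpM2l.
Qed.

Lemma simplex_avg_sub_le2 (p q l : 'I_K -> R) : in_simplex p -> in_simplex q ->
  (forall k, `|l k| <= 1) -> \sum_k (p k - q k) * l k <= 2.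
Proof.
move=> hp hq hl; under eq_bigr do rewrite mulrBl.
rewrite sumrB; have := abs_simplex_avg_le1 hp hl; have := abs_simplex_avg_le1 hq hl.
rewrite !ler_norml => /andP[h1 h2] /andP[h3 h4]; lra.
Qed.

Lemma expR_avg_le p u : in_simplex p ->
  expR (\sum_k p k * u k) <= \sum_k p k * expR (u k).
Proof.
move=> [p0 p1]; set a := \sum_k p k * u k.
have -> : \sum_k p k * expR (u k) = expR a * \sum_k p k * expR (u k - a).
  rewrite big_distrr /=; apply: eq_bigr => k _.
  by rewrite mulrCA -expRD addrCA subrr addr0.
rewrite -[X in X <= _]mulr1 ler_wpM2l ?expR_ge0 //.
have <- : \sum_k p k * (1 + (u k - a)) = 1.
  under eq_bigr do rewrite mulrDr mulr1 mulrBr.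
  by rewrite big_split /= sumrB p1 -/a -big_distrl /= p1 mul1r subrr addr0.
by apply: ler_sum => k _; rewrite ler_wpM2l // expR_ge1Dx.
Qed.

Lemma normalize_ratio u v e : (forall k, 0 < u k) -> (forall k, 0 < v k) ->
  (forall k, u k * expR (- e) <= v k <= u k * expR e) ->
  forall k, normalize u k * expR (- (e + e)) <= normalize v k
            <= normalize u k * expR (e + e).
Proof.
move=> hu hv huv k.
have Su := sum_pos_gt0 k hu; have Sv := sum_pos_gt0 k hv.
have /andP[lo hi] : (\sum_i u i) * expR (- e) <= \sum_i v i <= (\sum_i u i) * expR e.
  by rewrite !big_distrl /= !ler_sum // => i _; have /andP[] := huv i.
have /andP[vlo vhi] := huv k.
rewrite /normalize -[u k](@divfK _ (\sum_i u i)) ?lt0r_neq0 // in vlo vhi.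
set a := u k / \sum_i u i in vlo vhi *.
have a0 : 0 <= a by rewrite divr_ge0 // ltW.
have E1 := expRxMexpNx_1 e; have eg := expR_gt0 e; have eng := expR_gt0 (- e).
set f := expR (- e) in lo vlo eng E1 *; set g := expR e in hi vhi eg E1 *.
set S := \sum_i u i in lo hi vlo vhi Su; set V := \sum_i v i in lo hi Sv *.
rewrite /normalize -/a ler_pdivlMr // ler_pdivrMr // opprD !expRD -/f -/g.
have aff : 0 <= a * (f * f) := mulr_ge0 a0 (mulr_ge0 (ltW eng) (ltW eng)).
have agg : 0 <= a * (g * g) := mulr_ge0 a0 (mulr_ge0 (ltW eg) (ltW eg)).
apply/andP; split.
- apply: le_trans vlo; apply: (le_trans (ler_wpM2l aff hi)).
  have -> : a * (f * f) * (S * g) = a * S * f * (g * f) by ring.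
  by rewrite E1 mulr1.
- apply: (le_trans vhi); apply: le_trans (ler_wpM2l agg lo).
  have -> : a * (g * g) * (S * f) = a * S * g * (g * f) by ring.
  by rewrite E1 mulr1.
Qed.

Lemma normalize_ratio_dist u v e : (forall k, 0 < u k) -> (forall k, 0 < v k) ->
  (forall k, u k * expR (- e) <= v k <= u k * expR e) ->
  forall k, `|normalize u k - normalize v k| <= normalize u k * (expR (e + e) - 1).
Proof.
move=> hu hv huv k; apply: dist_le_of_expR_ratio; last exact: normalize_ratio.
by rewrite /normalize divr_ge0 // ltW // (sum_pos_gt0 k).
Qed.

Definition hedge_weights r M (eta : R) k := r k * expR (- eta * M k).

Lemma hedge_weights_gt0 r M eta k : (forall i, 0 < r i) -> 0 < hedge_weights r M eta k.
Proof. by move=> hr; rewrite mulr_gt0 ?expR_gt0. Qed.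

Hypothesis K_gt0 : (0 < K)%N.

Lemma normalize_avg_le_ln w c : (forall k, 0 < w k) ->
  \sum_k normalize w k * c k <= ln (\sum_k w k * expR (c k)) - ln (\sum_k w k).
Proof.
move=> hw; have Sw := sum_pos_gt0 (Ordinal K_gt0) hw.
have Swc : 0 < \sum_k w k * expR (c k).
  by apply: (sum_pos_gt0 (Ordinal K_gt0)) => k; rewrite mulr_gt0 ?expR_gt0.
rewrite -ln_div ?posrE //; apply: ln_ge_of_expR_le; first by rewrite divr_gt0.
apply: (le_trans (expR_avg_le _ (normalize_simplex K_gt0 hw))).
by rewrite /normalize big_distrl /=; apply: ler_sum => k _; rewrite mulrAC.
Qed.

Lemma optimistic_hedge_step r M l (eta : R) : (forall k, 0 < r k) ->
  let u := hedge_weights r M eta in let v := hedge_weights r l eta in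
  eta * (\sum_k normalize u k * l k
         - \sum_k (normalize u k - normalize v k) * (l k - M k))
  <= ln (\sum_k r k) - ln (\sum_k v k).
Proof.
move=> hr /=; set u := hedge_weights r M eta; set v := hedge_weights r l eta.
have hu k : 0 < u k := hedge_weights_gt0 M eta k hr.
have hv k : 0 < v k := hedge_weights_gt0 l eta k hr.
have r_of_u : \sum_k u k * expR (eta * M k) = \sum_k r k.
  by apply: eq_bigr => k _; rewrite -mulrA -expRD mulNr addNr expR0 mulr1.
have u_of_v : \sum_k v k * expR (eta * (l k - M k)) = \sum_k u k.
  by apply: eq_bigr => k _; rewrite -mulrA -expRD; congr (_ * expR _); ring.
have := normalize_avg_le_ln (fun k => eta * M k) hu.
have := normalize_avg_le_ln (fun k => eta * (l k - M k)) hv.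
rewrite r_of_u u_of_v.
suff -> : eta * (\sum_k normalize u k * l k
                 - \sum_k (normalize u k - normalize v k) * (l k - M k))
  = \sum_k normalize u k * (eta * M k) + \sum_k normalize v k * (eta * (l k - M k)).
  by lra.
by rewrite -sumrB -big_split mulr_sumr /=; apply: eq_bigr => k _; ring.
Qed.

Lemma optimistic_hedge_error_le r M l (eta d : R) : (forall k, 0 < r k) ->
  0 <= eta -> (forall k, `|l k - M k| <= d) -> eta * d <= 1/4 ->
  let u := hedge_weights r M eta in let v := hedge_weights r l eta in
  \sum_k (normalize u k - normalize v k) * (l k - M k) <= 4 * eta * d ^+ 2.
Proof.
move=> hr eta0 hd small /=.
set u := hedge_weights r M eta; set v := hedge_weights r l eta.
have d0 : 0 <= d by apply: le_trans (hd (Ordinal K_gt0)).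
have hu k : 0 < u k := hedge_weights_gt0 M eta k hr.
have hv k : 0 < v k := hedge_weights_gt0 l eta k hr.
have huv k : u k * expR (- (eta * d)) <= v k <= u k * expR (eta * d).
  rewrite /u /v /hedge_weights -!mulrA !ler_pM2l // -!expRD !ler_expR.
  by have := hd k; rewrite ler_norml => /andP[h1 h2]; apply/andP; split; nra.
have ed0 : 0 <= eta * d by rewrite mulr_ge0.
have grow : expR (eta * d + eta * d) - 1 <= 4 * (eta * d).
  by have := @expR_le1D2x R (eta * d + eta * d); lra.
apply: (le_trans (y := \sum_k normalize u k * (4 * (eta * d)) * d)).
  apply: ler_sum => k _; apply: (le_trans (ler_norm _)); rewrite normrM.
  apply: ler_pM; rewrite ?normr_ge0 ?hd //.
  apply: (le_trans (normalize_ratio_dist hu hv huv k)); apply: ler_wpM2l grow.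
  by rewrite /normalize divr_ge0 // ltW // (sum_pos_gt0 k).
have Su := sum_pos_gt0 (Ordinal K_gt0) hu.
by rewrite -!big_distrl /= divff ?mul1r ?(lt0r_neq0 Su) //; lra.
Qed.

End Hedge.

Section ProductDistribution.
Variables (R : realType) (J K : nat).
Implicit Types (x y : 'I_J -> 'I_K -> R) (b : profile J K).

Definition prod_weight x b : R := \prod_i x i (b i).

Lemma sum_prod_weight x : \sum_b prod_weight x b = \prod_i \sum_k x i k.
Proof. by rewrite bigA_distr_bigA. Qed.

Lemma prod_weight_ge0 x b : (forall i k, 0 <= x i k) -> 0 <= prod_weight x b.
Proof. by move=> h; apply: prodr_ge0 => i _. Qed.

Lemma sum_prod_weight_simplex x : (forall i, in_simplex (x i)) ->
  \sum_b prod_weight x b = 1.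
Proof. by move=> h; rewrite sum_prod_weight big1 // => i _; exact: (h i).2. Qed.

Definition hybrid x y (n : nat) (i : 'I_J) : 'I_K -> R :=
  if (i < n)%N then y i else x i.

Lemma hybrid_simplex x y n i : (forall i, in_simplex (x i)) ->
  (forall i, in_simplex (y i)) -> in_simplex (hybrid x y n i).
Proof. by rewrite /hybrid; case: (i < n)%N. Qed.

Lemma prod_weight_hybridS x y (n : 'I_J) b :
  prod_weight (hybrid x y n.+1) b - prod_weight (hybrid x y n) b
  = (y n (b n) - x n (b n)) * \prod_(i | i != n) hybrid x y n i (b i).
Proof.
rewrite /prod_weight (bigD1 n) //= [X in _ - X](bigD1 n) //= /hybrid ltnSn ltnn mulrBl.
congr (_ * _ - _); apply: eq_bigr => i /negbTE ni.
by rewrite ltnS leq_eqVlt -[_ == _]/(i == n) ni.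
Qed.

Lemma sum_dist_prod_weight_hybridS x y (n : 'I_J) :
  (forall i, in_simplex (x i)) -> (forall i, in_simplex (y i)) ->
  \sum_b `|prod_weight (hybrid x y n.+1) b - prod_weight (hybrid x y n) b|
  = \sum_k `|x n k - y n k|.
Proof.
move=> hx hy; pose c i k := if i == n then `|x n k - y n k| else hybrid x y n i k.
have hc := hybrid_simplex n _ hx hy.
transitivity (\sum_b prod_weight c b).
  apply: eq_bigr => b _; rewrite prod_weight_hybridS normrM distrC.
  rewrite /prod_weight [RHS](bigD1 n) //= /c eqxx; congr (_ * _).
  rewrite ger0_norm; last by apply: prodr_ge0 => i _; exact: (hc i).1.
  by apply: eq_bigr => i /negbTE ->.
rewrite sum_prod_weight (bigD1 n) //= [X in _ * X]big1 ?mulr1 /c ?eqxx //.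
by move=> i /negbTE ni; under eq_bigr do rewrite ni; exact: (hc i).2.
Qed.

(* Telescoping over the hybrids that switch one agent at a time from [x] to [y]. *)
Lemma l1_prod_weight_le x y : (forall i, in_simplex (x i)) ->
  (forall i, in_simplex (y i)) ->
  \sum_b `|prod_weight x b - prod_weight y b| <= \sum_i \sum_k `|x i k - y i k|.
Proof.
move=> hx hy.
have tel b : prod_weight x b - prod_weight y b
    = - \sum_(n < J) (prod_weight (hybrid x y n.+1) b - prod_weight (hybrid x y n) b).
  rewrite -(big_mkord xpredT (fun n => prod_weight (hybrid x y n.+1) b
                                      - prod_weight (hybrid x y n) b)).
  rewrite telescope_sumr // opprB /prod_weight /hybrid.
  by congr (_ - _); apply: eq_bigr => i _; rewrite ?ltn_ord ?ltn0.
under eq_bigr do rewrite tel normrN.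
apply: (le_trans (ler_sum _ (fun b _ => ler_norm_sum _ _ _))).
rewrite exchange_big /=; apply: ler_sum => n _.
by rewrite sum_dist_prod_weight_hybridS.
Qed.

End ProductDistribution.

Section ExpectedLoss.
Variables (R : realType) (J K d : nat) (j : 'I_J) (f : profile J K -> 'rV[R]_d).
Implicit Types (v : 'I_J -> 'I_K -> R) (Z : 'rV[R]_d).

Lemma trmul_Phi v Z k : trmul (Phi j f v) Z k =
  \sum_(b : profile J K | b j == k) (\prod_(i | i != j) v i (b i)) * inner (f b) Z.
Proof.
rewrite /trmul /inner; under eq_bigr do rewrite mxE big_distrl /=.
rewrite exchange_big /=; apply: eq_bigr => b _.
by rewrite big_distrr /=; apply: eq_bigr => l _; rewrite mulrA.
Qed.

Definition set_pure (a : 'I_K) v (i : 'I_J) (k : 'I_K) : R :=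
  if i == j then (k == a)%:R else v i k.

Lemma set_pure_simplex a v : (forall i, i != j -> in_simplex (v i)) ->
  forall i, in_simplex (set_pure a v i).
Proof.
move=> hv i; rewrite /set_pure; case: eqP => [_|/eqP ij]; last exact: hv.
split=> [k|]; first exact: ler0n.
by rewrite (bigD1 a) //= eqxx big1 ?addr0 // => k /negbTE ->.
Qed.

Lemma trmul_PhiE v Z a : trmul (Phi j f v) Z a =
  \sum_(b : profile J K) prod_weight (set_pure a v) b * inner (f b) Z.
Proof.
rewrite trmul_Phi big_mkcond; apply: eq_bigr => b _.
rewrite /prod_weight [in RHS](bigD1 j) //= /set_pure eqxx.
case: (b j == a); rewrite ?mul0r // mul1r; congr (_ * _).
by apply: eq_bigr => i /negbTE ->.
Qed.

Lemma trmul_Phi_le1 v Z a : (forall b, `|inner (f b) Z| <= 1) ->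
  (forall i, i != j -> in_simplex (v i)) ->
  `|trmul (Phi j f v) Z a| <= 1.
Proof.
move=> fZ hv; have hs := set_pure_simplex a hv; rewrite trmul_PhiE.
apply: (le_trans (ler_norm_sum _ _ _)); rewrite -(sum_prod_weight_simplex hs).
apply: ler_sum => b _; have w0 := prod_weight_ge0 b (fun i => (hs i).1).
by rewrite normrM ger0_norm // -[X in _ <= X]mulr1 ler_wpM2l.
Qed.

Lemma trmul_Phi_lipschitz v v' Z a : (forall b, `|inner (f b) Z| <= 1) ->
  (forall i, i != j -> in_simplex (v i)) -> (forall i, i != j -> in_simplex (v' i)) ->
  `|trmul (Phi j f v) Z a - trmul (Phi j f v') Z a|
    <= \sum_(i | i != j) \sum_k `|v i k - v' i k|.
Proof.
move=> fZ hv hv'; rewrite !trmul_PhiE -sumrB.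
apply: (le_trans (ler_norm_sum _ _ _)).
apply: (le_trans (y := \sum_b `|prod_weight (set_pure a v) b
                               - prod_weight (set_pure a v') b|)).
  apply: ler_sum => b _; rewrite -mulrBl normrM.
  by rewrite -[X in _ <= X]mulr1 ler_wpM2l.
apply: (le_trans (l1_prod_weight_le (set_pure_simplex a hv) (set_pure_simplex a hv'))).
rewrite (bigD1 j) //= big1 ?add0r => [|k _]; last by rewrite /set_pure eqxx subrr normr0.
by apply/ler_sum => i ij; rewrite /set_pure (negbTE ij).
Qed.

Lemma cost_Phi v Z : cost f v Z = \sum_k v j k * trmul (Phi j f v) Z k.
Proof.
under [RHS]eq_bigr do rewrite trmul_Phi big_distrr /=.
rewrite /cost (partition_big (fun b : profile J K => b j) xpredT) //=.
apply: eq_bigr => k _; apply: eq_bigr => b /eqP <-.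
by rewrite (bigD1 j) //= mulrA.
Qed.

Lemma Phi_replace v u : Phi j f (replace v j u) = Phi j f v.
Proof.
apply/matrixP => l k; rewrite !mxE; apply: eq_bigr => b _.
by congr (_ * _); apply: eq_bigr => i ij; rewrite /replace (negbTE ij).
Qed.

Lemma cost_sub_replace v u Z : cost f v Z - cost f (replace v j u) Z
  = \sum_k (v j k - u k) * trmul (Phi j f v) Z k.
Proof.
rewrite !cost_Phi Phi_replace -sumrB; apply: eq_bigr => k _.
by rewrite /replace eqxx mulrBl.
Qed.

End ExpectedLoss.

Section Dynamics.
Variables (R : realType) (J K m d : nat) (eta : R).
Variables (phi : 'I_J -> profile J K -> 'rV[R]_d) (ctx : 'I_m -> 'rV[R]_d).
Variables (Zs Zhat : nat -> 'I_m).
Hypothesis K_gt0 : (0 < K)%N.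
Hypothesis cost_bounded : forall j a z, `|inner (phi j a) (ctx z)| <= 1.

Let state t := pomwu_states eta phi ctx Zs Zhat t.
Let play t := pomwu_profile eta phi ctx Zs Zhat t.

(* What agent [i] would play at round [t] had the common prediction been [z]. *)
Definition play_at t i z := pomwu_play eta ctx z (state t i).
Definition loss i t z a := trmul (Phi i (phi i) (play t)) (ctx z) a.
Definition prediction i t z a := trmul (Psi (state t i) z) (ctx z) a.

Lemma stateS t i :
  state t.+1 i = pomwu_update eta ctx (Zs t) (Phi i (phi i) (play t)) (state t i).
Proof. by []. Qed.

Lemma rho_gt0 t i z a : 0 < rho (state t i) z a.
Proof.
elim: t i z a => [|t IH] i z a; first by rewrite /state /= invr_gt0 ltr0n.
by rewrite stateS /=; case: ifP => _; rewrite ?mulr_gt0 ?expR_gt0.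
Qed.

Lemma play_atE t i z :
  play_at t i z = normalize (hedge_weights (rho (state t i) z) (prediction i t z) eta).
Proof. by []. Qed.

Lemma play_at_simplex t i z : in_simplex (play_at t i z).
Proof.
by rewrite play_atE; apply: normalize_simplex => // l; apply/hedge_weights_gt0/rho_gt0.
Qed.

Lemma play_simplex t i : in_simplex (play t i).
Proof. exact: play_at_simplex. Qed.

Lemma loss_le1 i t z a : `|loss i t z a| <= 1.
Proof.
by apply: trmul_Phi_le1 => [b|i' _]; [exact: cost_bounded | exact: play_simplex].
Qed.

Fixpoint last_visit (z : 'I_m) (n : nat) : option nat :=
  if n is n'.+1 then (if Zs n' == z then Some n' else last_visit z n') else None.

Lemma last_visit_None z n : last_visit z n = None -> forall u, (u < n)%N -> Zs u != z.
Proof.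
elim: n => [|n IH] //= h u; rewrite ltnS leq_eqVlt; case: ifP h => // hz h.
by case/orP => [/eqP -> | /IH]; [rewrite hz | apply].
Qed.

Lemma last_visit_Some z n s : last_visit z n = Some s ->
  [/\ (s < n)%N, Zs s = z & forall u, (s < u < n)%N -> Zs u != z].
Proof.
elim: n => [|n IH] //=; case: ifP => hz.
  by case=> <-; split=> // [|u /andP[su un]]; [exact/eqP | lia].
move=> /IH [sn zs hu]; split=> //; first exact: ltnW.
move=> u /andP[su]; rewrite ltnS leq_eqVlt => /orP[/eqP -> | un]; first by rewrite hz.
by apply: hu; rewrite su.
Qed.

Lemma state_unvisited z n t i : (n <= t)%N ->
  (forall u, (n <= u < t)%N -> Zs u != z) ->
  (forall l, rho (state t i) z l = rho (state n i) z l) /\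
  Psi (state t i) z = Psi (state n i) z.
Proof.
elim: t => [|t IH] nt hu; first by move: nt; rewrite leqn0 => /eqP ->.
move: nt; rewrite leq_eqVlt => /orP[/eqP -> // | ]; rewrite ltnS => nt.
have zt : (z == Zs t) = false by apply/negbTE; rewrite eq_sym hu // nt ltnSn.
have [] // := IH nt; first by move=> u /andP[nu ut]; apply: hu; rewrite nu ltnW.
by rewrite stateS /= zt.
Qed.

Lemma Psi_last_visit t i z : Psi (state t i) z =
  if last_visit z t is Some s then Phi i (phi i) (play s) else 0.
Proof.
case E: (last_visit z t) => [s|].
  have [st zs hu] := last_visit_Some E.
  have [_ ->] := state_unvisited i st hu.
  by rewrite stateS /= zs eqxx.
have unvisited u : (0 <= u < t)%N -> Zs u != z by move/andP=> [_]; apply: last_visit_None.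
by have [_ ->] := state_unvisited i (leq0n t) unvisited.
Qed.

Lemma rho_last_visit t i z s : last_visit z t = Some s ->
  forall l, rho (state t i) z l = rho (state s i) z l * expR (- eta * loss i s z l).
Proof.
move=> E l; have [st zs hu] := last_visit_Some E.
have [-> _] := state_unvisited i st hu.
by rewrite stateS /= -zs eqxx.
Qed.

Lemma prediction_last_visit t i z a : prediction i t z a =
  if last_visit z t is Some s then loss i s z a else 0.
Proof.
rewrite /prediction Psi_last_visit; case: (last_visit z t) => // .
by rewrite /trmul big1 // => l _; rewrite mxE mul0r.
Qed.

Lemma prediction_le1 i t z a : `|prediction i t z a| <= 1.
Proof.
by rewrite prediction_last_visit; case: (last_visit z t) => [s|]; rewrite ?normr0 ?loss_le1.
Qed.

(* Between two visits of [z] the weights move once by the realised loss, and the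
   prediction switches from the old one to that loss: a factor [expR (3 eta)]. *)
Lemma play_at_stable t s i z : last_visit z t = Some s -> 0 <= eta ->
  forall k, `|play_at s i z k - play_at t i z k|
            <= play_at s i z k * (expR (3 * eta + 3 * eta) - 1).
Proof.
move=> E eta0 k; rewrite !play_atE.
apply: normalize_ratio_dist => l; try exact/hedge_weights_gt0/rho_gt0.
rewrite /hedge_weights (rho_last_visit i E) (prediction_last_visit t) E.
have := loss_le1 i s z l; have := prediction_le1 i s z l.
rewrite -!mulrA !ler_pM2l ?rho_gt0 // -!expRD !ler_expR !ler_norml.
by move=> /andP[a1 a2] /andP[b1 b2]; apply/andP; split; nra.
Qed.

Definition weight_sum t j z := \sum_l rho (state t j) z l.
Definition potential t j := \sum_z ln (weight_sum t j z).

Definition hedge_error t j :=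
  let z := Zs t in
  \sum_k (play_at t j z k
          - normalize (hedge_weights (rho (state t j) z) (loss j t z) eta) k)
         * (loss j t z k - prediction j t z k).

Lemma potential_step t j :
  eta * (\sum_k play_at t j (Zs t) k * loss j t (Zs t) k - hedge_error t j)
  <= potential t j - potential t.+1 j.
Proof.
apply: (le_trans (optimistic_hedge_step K_gt0 _ _ _ (rho_gt0 t j (Zs t)))).
rewrite /potential (bigD1 (Zs t)) //= [X in _ <= _ - X](bigD1 (Zs t)) //=.
have -> : \sum_(z < m | z != Zs t) ln (weight_sum t.+1 j z)
        = \sum_(z < m | z != Zs t) ln (weight_sum t j z).
  by apply: eq_bigr => z zt; rewrite /weight_sum stateS /= (negbTE zt).
by rewrite /weight_sum stateS /= eqxx; lra.
Qed.

Lemma potential_telescope T j :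
  eta * \sum_(t < T) (\sum_k play_at t j (Zs t) k * loss j t (Zs t) k - hedge_error t j)
  <= potential 0 j - potential T j.
Proof.
elim: T => [|T IH]; first by rewrite big_ord0 mulr0 subrr.
by rewrite big_ord_recr /= mulrDr; have := potential_step T j; lra.
Qed.

Lemma potential0 j : potential 0 j = 0.
Proof.
rewrite /potential big1 // => z _; rewrite /weight_sum sumr_const card_ord.
by rewrite -[_^-1 *+ _]mulr_natl mulfV ?ln1 // pnatr_eq0 -lt0n.
Qed.

Lemma rhoE t i z l : rho (state t i) z l =
  K%:R^-1 * expR (- eta * \sum_(u < t | Zs u == z) loss i u z l).
Proof.
elim: t => [|t IH]; first by rewrite big_ord0 mulr0 expR0 mulr1.
rewrite stateS /= big_mkcond big_ord_recr /= -big_mkcond /= IH.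
case: (eqVneq z (Zs t)) => [->|zt]; last by rewrite addr0.
by rewrite -mulrA -expRD mulrDr.
Qed.

(* Jensen against the comparator [p] gives the usual [ln K] entropy term per context. *)
Lemma ln_weight_sum_ge T j z (p : 'I_K -> R) : 0 <= eta -> in_simplex p ->
  - ln (weight_sum T j z)
  <= ln K%:R + eta * \sum_k p k * \sum_(u < T | Zs u == z) loss j u z k.
Proof.
move=> eta0 hp; set Lz := fun k => \sum_(u < T | Zs u == z) loss j u z k.
have K0 : 0 < (K%:R : R) by rewrite ltr0n.
have lower : K%:R^-1 * expR (\sum_k p k * (- eta * Lz k)) <= weight_sum T j z.
  apply: (le_trans (y := K%:R^-1 * \sum_k p k * expR (- eta * Lz k))).
    by rewrite ler_wpM2l ?invr_ge0 ?ler0n ?expR_avg_le.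
  rewrite big_distrr /=; apply: ler_sum => k _; rewrite rhoE mulrCA.
  rewrite -[X in _ <= X]mul1r ler_wpM2r ?simplex_le1 //.
  by rewrite mulr_ge0 ?invr_ge0 ?ler0n ?expR_ge0.
have S0 : 0 < weight_sum T j z.
  by apply: (sum_pos_gt0 (Ordinal K_gt0)) => l; exact: rho_gt0.
move: lower; rewrite -ler_ln ?posrE ?mulr_gt0 ?invr_gt0 ?expR_gt0 //.
rewrite lnM ?posrE ?invr_gt0 ?expR_gt0 // lnV ?posrE // expRK.
have -> : \sum_k p k * (- eta * Lz k) = - (eta * \sum_k p k * Lz k).
  by rewrite mulr_sumr -sumrN; apply: eq_bigr => k _; ring.
lra.
Qed.

Lemma potential_ge T j (p : 'I_m -> 'I_K -> R) : 0 <= eta ->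
  (forall z, in_simplex (p z)) ->
  - potential T j
  <= m%:R * ln K%:R + eta * \sum_(t < T) \sum_k p (Zs t) k * loss j t (Zs t) k.
Proof.
move=> eta0 hp; rewrite /potential -sumrN.
apply: (le_trans (ler_sum _ (fun z _ => ln_weight_sum_ge T j z eta0 (hp z)))).
rewrite big_split /= sumr_const card_ord -[_ *+ m]mulr_natl -mulr_sumr.
rewrite lerD2l ler_wpM2l // [X in _ <= X](partition_big (fun t : 'I_T => Zs t) xpredT) //=.
apply: ler_sum => z _; under eq_bigr do rewrite big_distrr /=.
by rewrite exchange_big /=; apply: ler_sum => u /eqP <-.
Qed.

Lemma optimistic_regret_le T j (p : 'I_m -> 'I_K -> R) : 0 <= eta ->
  (forall z, in_simplex (p z)) ->
  eta * \sum_(t < T) \sum_k (play_at t j (Zs t) k - p (Zs t) k) * loss j t (Zs t) k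
  <= m%:R * ln K%:R + eta * \sum_(t < T) hedge_error t j.
Proof.
move=> eta0 hp; have tel := potential_telescope T j.
have lb := potential_ge T j eta0 hp; rewrite potential0 sub0r in tel.
set G := \sum_(t < T) _ in tel; set E := \sum_(t < T) hedge_error t j in lb *.
set P := \sum_(t < T) \sum_k p (Zs t) k * _ in lb.
suff -> : \sum_(t < T) \sum_k (play_at t j (Zs t) k - p (Zs t) k) * loss j t (Zs t) k
  = G + E - P by rewrite mulrBr mulrDr; lra.
rewrite /G /E /P -big_split -sumrB /=; apply: eq_bigr => t _.
by rewrite subrK -sumrB; apply: eq_bigr => k _; rewrite mulrBl.
Qed.

Definition mispredicted t := Zhat t != Zs t.
Definition first_visit t := last_visit (Zs t) t == None.
Definition follows_misprediction t :=
  if last_visit (Zs t) t is Some s then mispredicted s else false.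
(* Rounds in which the prediction [Psi] need not be close to the realised loss. *)
Definition bad_round t := [|| first_visit t, mispredicted t | follows_misprediction t].

Lemma misprediction_regret_le T j :
  \sum_(t < T) \sum_k (play t j k - play_at t j (Zs t) k) * loss j t (Zs t) k
  <= 2 * (pred_errors T Zs Zhat)%:R.
Proof.
rewrite /pred_errors -sum1_card natr_sum mulr_sumr [X in _ <= X]big_mkcond /=.
apply: ler_sum => t _; rewrite inE.
case: (eqVneq (Zhat t) (Zs t)) => [correct | _] /=.
  by rewrite big1 ?mulr0 // => k _; rewrite /play /pomwu_profile correct subrr mul0r.
rewrite mulr1; apply: simplex_avg_sub_le2 (play_simplex t j) (play_at_simplex t j _) _.
exact: loss_le1.
Qed.

Lemma loss_sub_prediction_le2 t j k :
  `|loss j t (Zs t) k - prediction j t (Zs t) k| <= 2.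
Proof.
apply: (le_trans (ler_normB _ _)).
by have := loss_le1 j t (Zs t) k; have := prediction_le1 j t (Zs t) k; lra.
Qed.

(* In a good round every agent played, at both visits of [Zs t], the strategy for
   the true context, so the stability of each agent transfers to the losses. *)
Lemma loss_sub_prediction_le t j k : ~~ bad_round t -> 0 <= eta -> eta <= 1/12 ->
  `|loss j t (Zs t) k - prediction j t (Zs t) k| <= J%:R * (12 * eta).
Proof.
move=> good eta0 eta_small.
case E: (last_visit (Zs t) t) good => [s|]; last by rewrite /bad_round /first_visit E.
rewrite /bad_round /first_visit /follows_misprediction /mispredicted E /=.
rewrite negb_or => /andP[/negPn/eqP ht /negPn/eqP hs].
have [_ zs _] := last_visit_Some E.
rewrite prediction_last_visit E.
apply: (le_trans (trmul_Phi_lipschitz k (cost_bounded j ^~ (Zs t))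
  (fun i _ => play_simplex t i) (fun i _ => play_simplex s i))).
have grow : expR (3 * eta + 3 * eta) - 1 <= 12 * eta.
  by have := @expR_le1D2x R (3 * eta + 3 * eta); lra.
apply: (le_trans (y := \sum_(i < J | i != j) (12 * eta))).
  apply: ler_sum => i _; rewrite /play /pomwu_profile ht hs zs.
  apply: (le_trans (y := \sum_k0 play_at s i (Zs t) k0 * (12 * eta))).
    apply: ler_sum => k0 _; rewrite distrC; apply: (le_trans (play_at_stable i E eta0 k0)).
    by apply: ler_wpM2l grow; exact: (play_at_simplex s i _).1.
  by rewrite -big_distrl /= (play_at_simplex s i _).2 mul1r.
apply: (le_trans (y := \sum_(i < J) (12 * eta))); last first.
  by rewrite sumr_const card_ord (mulr_natl (12 * eta) J).
by rewrite [X in _ <= X](bigID (fun i => i != j)) /= lerDl sumr_ge0 // => i _; lra.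
Qed.

Lemma hedge_error_le t j : 0 <= eta -> eta <= 1/12 ->
  hedge_error t j <= 4 * eta * (if bad_round t then 4 else (J%:R * (12 * eta)) ^+ 2).
Proof.
move=> eta0 eta_small.
have crude : hedge_error t j <= 4 * eta * 2 ^+ 2.
  apply: optimistic_hedge_error_le => //; first exact: rho_gt0.
  - exact: loss_sub_prediction_le2.
  - lra.
case: ifP => bad; first by move: crude; lra.
have D0 : 0 <= J%:R * (12 * eta) by rewrite mulr_ge0 ?ler0n //; lra.
case: (lerP (J%:R * (12 * eta)) 2) => D2.
  apply: optimistic_hedge_error_le => //; first exact: rho_gt0.
  - by move=> k; apply: loss_sub_prediction_le; rewrite ?bad.
  - nra.
by apply: (le_trans crude); apply: ler_wpM2l; nra.
Qed.

Lemma card_first_visit_le T : (#|[set t : 'I_T | first_visit t]| <= m)%N.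
Proof.
rewrite -(card_in_imset (f := fun t : 'I_T => Zs t)).
  by rewrite -[X in (_ <= X)%N]card_ord max_card.
move=> t1 t2; rewrite !inE => /eqP first1 /eqP first2 same; apply/val_inj => /=.
case: (ltngtP t1 t2) => // lt.
- by move: (last_visit_None first2 lt); rewrite same eqxx.
- by move: (last_visit_None first1 lt); rewrite same eqxx.
Qed.

(* Each mispredicted round is the last visit of at most one later round. *)
Lemma card_follows_misprediction_le T :
  (#|[set t : 'I_T | follows_misprediction t]| <= pred_errors T Zs Zhat)%N.
Proof.
pose prev (t : 'I_T) := insubd t (odflt 0%N (last_visit (Zs t) t)) : 'I_T.
have prevP (t : 'I_T) : follows_misprediction t -> exists s,
    [/\ last_visit (Zs t) t = Some s, val (prev t) = s & mispredicted s].
  rewrite /follows_misprediction; case E: (last_visit (Zs t) t) => [s|] // ms.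
  have [st _ _] := last_visit_Some E.
  by exists s; rewrite /prev E val_insubd /= (ltn_trans st (ltn_ord t)).
rewrite -(card_in_imset (f := prev)).
  apply: subset_leq_card; apply/subsetP => _ /imsetP[t ht ->].
  by move: ht; rewrite !inE => /prevP[s [_ -> ms]].
move=> t1 t2; rewrite !inE => /prevP[s1 [E1 v1 _]] /prevP[s2 [E2 v2 _]] same.
have s12 : s1 = s2 by rewrite -v1 -v2 same.
rewrite -s12 in E2; have [st1 z1 hu1] := last_visit_Some E1.
have [st2 z2 hu2] := last_visit_Some E2.
apply/val_inj; case: (ltngtP t1 t2) => // lt.
- by move: (hu2 t1); rewrite st1 lt -z1 z2 eqxx => /(_ isT).
- by move: (hu1 t2); rewrite st2 lt -z2 z1 eqxx => /(_ isT).
Qed.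

Lemma card_bad_round_le T :
  (#|[set t : 'I_T | bad_round t]| <= m + 2 * pred_errors T Zs Zhat)%N.
Proof.
have cardU (A B : {set 'I_T}) : (#|A :|: B| <= #|A| + #|B|)%N.
  by rewrite cardsU leq_subr.
have -> : [set t : 'I_T | bad_round t] = [set t : 'I_T | first_visit t]
    :|: [set t : 'I_T | mispredicted t] :|: [set t : 'I_T | follows_misprediction t].
  by apply/setP => t; rewrite !inE /bad_round orbA.
apply: (leq_trans (cardU _ _)); apply: (leq_trans (leq_add (cardU _ _) (leqnn _))).
have := card_first_visit_le T; have := card_follows_misprediction_le T.
rewrite /pred_errors /mispredicted mul2n -addnn addnA => hc ha.
exact: leq_add (leq_add ha (leqnn _)) hc.
Qed.

Lemma sum_hedge_error_le T j : 0 <= eta -> eta <= 1/12 ->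
  \sum_(t < T) hedge_error t j
  <= 16 * eta * (m + 2 * pred_errors T Zs Zhat)%:R + 576 * eta ^+ 3 * T%:R * J%:R ^+ 2.
Proof.
move=> eta0 eta_small; set c := (J%:R * (12 * eta)) ^+ 2.
apply: (le_trans (ler_sum _ (fun (t : 'I_T) _ => hedge_error_le t j eta0 eta_small))).
rewrite -mulr_sumr -(big_mkord xpredT (fun t => if bad_round t then 4 else c)).
rewrite (bigID bad_round) /= !big_mkord.
under eq_bigr do rewrite ifT //.
under [X in _ + X]eq_bigr => t nb do rewrite (negbTE nb).
rewrite !sumr_const -[4 *+ _]mulr_natr -[c *+ _]mulr_natr.
have nbad : (#|[pred t : 'I_T | bad_round t]|%:R : R) <= (m + 2 * pred_errors T Zs Zhat)%:R.
  rewrite ler_nat; apply: leq_trans (card_bad_round_le T).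
  by apply/eq_leq/eq_card => t; rewrite inE.
have ngood : (#|[pred t : 'I_T | ~~ bad_round t]|%:R : R) <= T%:R.
  by rewrite ler_nat -[X in (_ <= X)%N]card_ord max_card.
have c0 : 0 <= c by rewrite sqr_ge0.
have -> : 16 * eta * (m + 2 * pred_errors T Zs Zhat)%:R + 576 * eta ^+ 3 * T%:R * J%:R ^+ 2
  = 4 * eta * (4 * (m + 2 * pred_errors T Zs Zhat)%:R + c * T%:R) by rewrite /c; ring.
by rewrite ler_wpM2l ?mulr_ge0 // lerD // ler_wpM2l.
Qed.

Lemma regret_againstE T j pi : regret_against T phi ctx Zs play j pi =
  \sum_(t < T) \sum_k (play t j k - pi (Zs t) k) * loss j t (Zs t) k.
Proof.
by rewrite /regret_against -sumrB; apply: eq_bigr => t _; rewrite cost_sub_replace.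
Qed.

Lemma regret_against_le2T T j pi : (forall z, in_simplex (pi z)) ->
  regret_against T phi ctx Zs play j pi <= 2 * T%:R.
Proof.
move=> hpi; rewrite regret_againstE -[T in _ * T%:R]card_ord -sumr_const mulr_sumr.
apply: ler_sum => t _; rewrite mulr1.
exact: simplex_avg_sub_le2 (play_simplex t j) (hpi _) (loss_le1 j t _).
Qed.

Lemma regret_against_single_action T j pi : K = 1%N ->
  (forall z, in_simplex (pi z)) -> regret_against T phi ctx Zs play j pi = 0.
Proof.
move=> K1 hpi; rewrite regret_againstE big1 // => t _; rewrite big1 // => k _.
have val0 (i : 'I_K) : val i = 0%N.
  by case: i => [[|n] ni] //=; rewrite K1 in ni.
have sum1 (p : 'I_K -> R) : \sum_k' p k' = p k.
  by rewrite (big_pred1 k) // => k' /=; apply/esym/eqP/val_inj; rewrite !val0.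
have := (play_simplex t j).2; have := (hpi (Zs t)).2; rewrite !sum1 => -> ->.
by rewrite subrr mul0r.
Qed.

Theorem pomwu_regret_le T j pi : 0 < eta -> eta <= 1/12 ->
  (forall z, in_simplex (pi z)) ->
  regret_against T phi ctx Zs play j pi
  <= ln K%:R * m%:R / eta + 5 * (pred_errors T Zs Zhat + m)%:R
     + 576 * eta ^+ 3 * T%:R * J%:R ^+ 2.
Proof.
move=> eta_pos eta_small hpi; have eta0 := ltW eta_pos.
rewrite regret_againstE.
set L := pred_errors T Zs Zhat.
set Opt := \sum_(t < T) \sum_k (play_at t j (Zs t) k - pi (Zs t) k) * loss j t (Zs t) k.
set Mis := \sum_(t < T) \sum_k (play t j k - play_at t j (Zs t) k) * loss j t (Zs t) k.
have -> : \sum_(t < T) \sum_k (play t j k - pi (Zs t) k) * loss j t (Zs t) k = Opt + Mis.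
  rewrite -big_split /=; apply: eq_bigr => t _.
  by rewrite -big_split /=; apply: eq_bigr => k _; ring.
have hOpt : Opt <= ln K%:R * m%:R / eta + \sum_(t < T) hedge_error t j.
  have -> : ln K%:R * m%:R / eta + \sum_(t < T) hedge_error t j
          = eta^-1 * (m%:R * ln K%:R + eta * \sum_(t < T) hedge_error t j).
    by field; exact: lt0r_neq0.
  by rewrite ler_pdivlMl //; exact: optimistic_regret_le.
have hMis : Mis <= 2 * L%:R := misprediction_regret_le T j.
have hE := sum_hedge_error_le T j eta0 eta_small; rewrite -/L in hE.
set E := \sum_(t < T) hedge_error t j in hOpt hE.
set X : R := (m + 2 * L)%:R in hE.
have X0 : 0 <= X := ler0n _ _.
have hX : X <= 2 * (L + m)%:R by rewrite -natrM ler_nat; lia.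
have : 16 * eta * X <= X * 4 / 3 by nra.
lra.
Qed.

End Dynamics.

Section Tuning.
Variable R : realType.

(* With [x = A^(1/4)], [s = T^(1/4)], [y = J^(1/2)] and [eta = x / (y s)]:
   each term of the small-[eta] bound is at most a constant times [x^3 s y],
   and for large [eta] the trivial bound [2 T] is. *)
Lemma tuned_rate_le (x s y eta B M Reg : R) :
  0 < x -> 0 < s -> 1 <= y -> eta * (y * s) = x ->
  B <= x ^+ 4 -> M <= 2 * x ^+ 4 -> Reg <= 2 * s ^+ 4 ->
  (eta <= 1/12 -> Reg <= B / eta + 5 * M + 576 * eta ^+ 3 * s ^+ 4 * y ^+ 4) ->
  Reg <= 4000 * x ^+ 3 * s * y.
Proof.
move=> x0 s0 y1 eta_def hB hM trivial small.
have ys0 : 0 < y * s by rewrite mulr_gt0 // (lt_le_trans ltr01).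
have eta0 : 0 < eta by rewrite -(pmulr_lgt0 _ ys0) eta_def.
have x3 : 0 <= x ^+ 3 by rewrite exprn_ge0 ?ltW.
case: (lerP eta (1/12)) => [eta_small | eta_large].
  have hBe : B / eta <= x ^+ 3 * (s * y).
    have -> : x ^+ 3 * (s * y) = x ^+ 4 / eta.
      by rewrite -eta_def; field; exact: lt0r_neq0.
    by rewrite ler_pM2r ?invr_gt0.
  have hMx : 5 * M <= 10 * x ^+ 3 * (s * y) / 12.
    have xle : x <= y * s / 12 by rewrite -eta_def; nra.
    by have := ler_wpM2l x3 xle; rewrite -exprSr; nra.
  have hrest : 576 * eta ^+ 3 * s ^+ 4 * y ^+ 4 = 576 * x ^+ 3 * (s * y).
    by rewrite -eta_def; ring.
  have := small eta_small; rewrite hrest => hReg.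
  have : 0 <= x ^+ 3 * (s * y) by rewrite mulr_ge0 // ltW // mulrC.
  nra.
have ys_lt : y * s < 12 * x by rewrite -eta_def; nra.
have s4 : s ^+ 4 <= (y * s) ^+ 3 * (y * s).
  rewrite -exprSr exprMn -[X in X <= _]mul1r.
  by apply: ler_wpM2r; [exact: exprn_ge0 (ltW s0) | exact: exprn_ege1].
have cube : (y * s) ^+ 3 <= (12 * x) ^+ 3.
  by rewrite lerXn2r ?nnegrE // ?ltW //; nra.
have := ler_wpM2r (ltW ys0) cube.
nra.
Qed.

Lemma powR_exprn (a r : R) (n : nat) : 0 <= a -> r * n%:R = 1 -> (a `^ r) ^+ n = a.
Proof. by move=> a0 h; rewrite -powR_mulrn ?powR_ge0 // -powRrM h powRr1. Qed.

Lemma tuned_rate_powR_le (lnK M T J eta B Reg : R) :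
  1/2 <= lnK -> 0 < M -> 0 < T -> 2 <= J ->
  eta = J `^ (- (1/2)) * T `^ (- (1/4)) * (lnK * M) `^ (1/4) ->
  B <= lnK * M -> Reg <= 2 * T ->
  (0 < eta -> eta <= 1/12 -> Reg <= B / eta + 5 * M + 576 * eta ^+ 3 * T * J ^+ 2) ->
  Reg <= 4000 * (lnK * M) `^ (3/4) * T `^ (1/4) * J `^ (1/2).
Proof.
move=> lnK0 M0 T0 J2 eta_def hB trivial small.
have A0 : 0 < lnK * M by rewrite mulr_gt0 //; lra.
set x := (lnK * M) `^ (1/4) in eta_def *.
set s := T `^ (1/4) in eta_def *; set y := J `^ (1/2) in eta_def *.
have x4 : x ^+ 4 = lnK * M by apply: powR_exprn; [exact: ltW | field].
have s4 : s ^+ 4 = T by apply: powR_exprn; [exact: ltW | field].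
have y2 : y ^+ 2 = J by apply: powR_exprn; [lra | field].
have -> : (lnK * M) `^ (3/4) = x ^+ 3.
  by rewrite -powR_mulrn ?powR_ge0 // -powRrM; congr (_ `^ _); field.
have x0 : 0 < x := powR_gt0 _ A0; have s0 : 0 < s := powR_gt0 _ T0.
have y0 : 0 <= y := powR_ge0 _ _.
have y1 : 1 <= y by nra.
have eta_ys : eta * (y * s) = x.
  by rewrite eta_def !powRN -/y -/s; field; rewrite ?gt_eqF // (lt_le_trans ltr01).
have eta0 : 0 < eta.
  by rewrite -(pmulr_lgt0 _ (mulr_gt0 (lt_le_trans ltr01 y1) s0)) eta_ys.
apply: (tuned_rate_le (eta := eta) (B := B) (M := M)); rewrite ?s4 ?x4 //.
- by nra.
- have y4 : y ^+ 4 = J ^+ 2 by rewrite -y2 -exprM.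
  by rewrite y4; exact: small.
Qed.

End Tuning.

Theorem proposition9 (R : realType) :
  exists c C : R, 0 < c /\ 0 < C /\
  forall (J K m d T : nat) (ctx : 'I_m -> 'rV[R]_d)
         (phi : 'I_J -> profile J K -> 'rV[R]_d) (Zs Zhat : nat -> 'I_m),
    injective ctx ->
    (2 <= J)%N -> (0 < K)%N -> (0 < T)%N ->
    (* bounded-cost assumption *)
    (forall j a z, `| inner (phi j a) (ctx z) | <= 1) ->
    let L := pred_errors T Zs Zhat in
    let eta := c * J%:R `^ (- (1/2)) * T%:R `^ (- (1/4))
                 * (ln K%:R * (L + m)%:R) `^ (1/4) in
    let w := pomwu_profile eta phi ctx Zs Zhat in
    forall (j : 'I_J) (pi : 'I_m -> 'I_K -> R),
      (forall z, in_simplex (pi z)) ->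
      regret_against T phi ctx Zs w j pi
        <= C * (ln K%:R * (L + m)%:R) `^ (3/4) * T%:R `^ (1/4) * J%:R `^ (1/2).
Proof.
exists 1, 4000; split; first lra; split; first lra.
move=> J K m d T ctx phi Zs Zhat _ J2 K0 T0 bounded L eta w j pi hpi.
have [K1 | K_ne1] := eqVneq K 1%N.
  by rewrite regret_against_single_action // !mulr_ge0 ?powR_ge0.
have m0 : (0 < m)%N := leq_ltn_trans (leq0n _) (ltn_ord (Zs 0%N)).
apply: (tuned_rate_powR_le (eta := eta) (B := ln K%:R * m%:R)).
- by apply: le_trans (half_le_ln2 R) _; rewrite ler_ln ?posrE ?ltr0n // ler_nat; lia.
- by rewrite ltr0n addn_gt0 m0 orbT.
- by rewrite ltr0n.
- by rewrite ler_nat.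
- by rewrite /eta mul1r.
- by rewrite ler_wpM2l ?ler_nat ?leq_addl // -ln1 ler_ln ?posrE ?ler1n ?ltr0n.
- exact: regret_against_le2T.
- by move=> eta_pos eta_small; exact: pomwu_regret_le.
Qed.
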